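(* For every $\mathcal{L}_{A}^{\Box}$-formula $\varphi$: $\varphi$ is $\mathsf{K(A)}$-valid if and only if $\varphi$ is valid in all finite serial $\mathsf{K(A)}$-models.
   Context: The language $\mathcal{L}_{A}^{\Box}$ has binary connectives $\wedge,\vee,\&,\to$, a constant $\overline{0}$ and a unary connective $\Box$; formulas are built from a countably infinite set $\mathrm{Var}$ of propositional variables. A $\mathsf{K(A)}$-model $\mathfrak{M}=\langle W,R,V\rangle$ consists of a nonempty set $W$, a relation $R\subseteq W\times W$, and a map $V\colon \mathrm{Var}\times W\to[-r,r]$ for some real $r\ge 0$, extended to all formulas by $V(\varphi\wedge\psi,x)=\min(V(\varphi,x),V(\psi,x))$, $V(\varphi\vee\psi,x)=\max(V(\varphi,x),V(\psi,x))$, $V(\varphi\&\psi,x)=V(\varphi,x)+V(\psi,x)$, $V(\varphi\to\psi,x)=V(\psi,x)-V(\varphi,x)$, $V(\overline{0},x)=0$, and $V(\Box\varphi,x)=\inf_{\mathbb{R}}\{V(\varphi,y): Rxy\}$, with the convention that the infimum of the empty set is $0$. A formula $\varphi$ is valid in $\mathfrak{M}$ if $V(\varphi,x)\ge 0$ for all $x\in W$, and $\mathsf{K(A)}$-valid if it is valid in all $\mathsf{K(A)}$-models. A model is finite if $W$ is finite, and serial if every $x\in W$ has some $y$ with $Rxy$. *)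

From HB Require Import structures.
From mathcomp Require Import all_boot all_order all_algebra.
From mathcomp Require Import boolp classical_sets reals Rstruct.
Unset Printing Implicit Defensive.
Import Order.TTheory GRing.Theory Num.Theory.
Local Open Scope ring_scope.
Local Open Scope classical_set_scope.

Notation Real := Rdefinitions.R.

Inductive form : Type :=
| FVar : nat -> form
| FAnd : form -> form -> form
| FOr  : form -> form -> form
| FFus : form -> form -> form
| FImp : form -> form -> form
| FZero : form
| FBox : form -> form.

Record model : Type := Model {
  world : Type;
  world_nonempty : inhabited world;
  acc : world -> world -> Prop;
  val : nat -> world -> Real;
  bound : Real;
  bound_ge0 : 0 <= bound;
  val_bounded : forall p x, - bound <= val p x <= bound
}.

(* Infimum in R over a set, with inf of the empty set = 0 (explicit convention). *)
Definition inf0 (E : set Real) : Real :=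
  if E == set0 then 0 else inf E.

Fixpoint eval (M : model) (phi : form) (x : world M) : Real :=
  match phi with
  | FVar p => @val M p x
  | FAnd a b => Num.min (eval M a x) (eval M b x)
  | FOr a b => Num.max (eval M a x) (eval M b x)
  | FFus a b => eval M a x + eval M b x
  | FImp a b => eval M b x - eval M a x
  | FZero => 0
  | FBox a => inf0 [set eval M a y | y in [set y | @acc M x y]]
  end.

Definition valid_in (M : model) (phi : form) : Prop :=
  forall x : world M, 0 <= eval M phi x.

Definition KA_valid (phi : form) : Prop := forall M : model, valid_in M phi.

Definition finite_model (M : model) : Prop :=
  exists l : seq (world M), forall x, List.In x l.

Definition serial_model (M : model) : Prop :=
  forall x : world M, exists y, @acc M x y.

(** Suppose [eval M phi x < 0]. Unravel [M] from [x] into a tree of depth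
[d = mdepth phi] whose nodes of depth [k] are paths of [k] steps in [M], each
step going to a successor that minimises, up to [eps], one of the finitely many
boxed subformulas of [phi]; the tree is therefore finite.  Leaves, and nodes
whose world has no successor, point to an extra world [None] where every formula
evaluates to [0]: this makes the tree serial and keeps the value [0] of boxes at
dead ends.  By induction on [psi], at a node of depth [k] with
[mdepth psi + k <= d] the value of [psi] is within [n * eps] of its value in
[M], where [n] counts the boxes of [psi]: the near-minimising children pin each
infimum down up to [eps].  Choosing [n * eps < - eval M phi x] keeps [phi]
false at the root. *)

From mathcomp Require Import all_boot all_order all_algebra.
From mathcomp Require Import boolp classical_sets reals Rstruct.
From mathcomp Require Import lra zify.
From Stdlib Require Import ClassicalEpsilon.

Unset Printing Implicit Defensive.
Import Order.TTheory GRing.Theory Num.Theory.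
Local Open Scope ring_scope.
Local Open Scope classical_set_scope.

Lemma In_nth {T : Type} (x0 : T) {s : seq T} {a} :
  List.In a s -> exists2 i, (i < size s)%N & nth x0 s i = a.
Proof.
elim: s => //= b s IHs [<-|/IHs[i lt_i_s <-]]; first by exists 0%N.
by exists i.+1.
Qed.

Lemma mem_In {T : eqType} (s : seq T) y : y \in s -> List.In y s.
Proof. by elim: s => //= z s IHs; rewrite in_cons => /predU1P[->|/IHs]; [left|right]. Qed.

Lemma inf_within (R : realType) (E : set R) (lo hi : R) :
  (forall z, E z -> lo <= z) -> (exists2 z, E z & z <= hi) -> lo <= inf E <= hi.
Proof.
move=> lbE [z Ez le_z]; rewrite lb_le_inf //=; last by exists z.
by rewrite (le_trans _ le_z) //; apply: ge_inf Ez; exists lo.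
Qed.

Lemma inf0_nonempty (E : set Real) : E !=set0 -> inf0 E = inf E.
Proof. by move=> [z Ez]; rewrite /inf0; case: eqP => // E0; rewrite E0 in Ez. Qed.

Lemma inf0_within (E : set Real) (lo hi : Real) :
  (forall z, E z -> lo <= z) -> (exists2 z, E z & z <= hi) -> lo <= inf0 E <= hi.
Proof.
move=> lbE [z Ez le_z]; rewrite inf0_nonempty; last by exists z.
by apply: inf_within lbE _; exists z.
Qed.

Lemma dist_binop_le {R : realDomainType} {a b a' b' ea eb : R} :
  `|a - a'| <= ea -> `|b - b'| <= eb ->
  [/\ `|Num.min a b - Num.min a' b'| <= ea + eb,
      `|Num.max a b - Num.max a' b'| <= ea + eb,
      `|a + b - (a' + b')| <= ea + eb & `|b - a - (b' - a')| <= ea + eb].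
Proof.
rewrite !ler_distl => /andP[? ?] /andP[? ?].
by split; case: (leP a b); case: (leP a' b'); lra.
Qed.

Fixpoint fsize (f : form) : nat :=
  match f with
  | FVar _ | FZero => 1
  | FAnd a b | FOr a b | FFus a b | FImp a b => (fsize a + fsize b).+1
  | FBox a => (fsize a).+1
  end.

Fixpoint mdepth (f : form) : nat :=
  match f with
  | FVar _ | FZero => 0
  | FAnd a b | FOr a b | FFus a b | FImp a b => maxn (mdepth a) (mdepth b)
  | FBox a => (mdepth a).+1
  end.

Fixpoint boxed_subforms (f : form) : seq form :=
  match f with
  | FVar _ | FZero => [::]
  | FAnd a b | FOr a b | FFus a b | FImp a b => boxed_subforms a ++ boxed_subforms b
  | FBox a => a :: boxed_subforms a
  end.

Section ModelFacts.
Variable M : model.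

Definition live (u : world M) : Prop := exists v, acc M u v.

Lemma eval_bounded psi x :
  - ((fsize psi)%:R * bound M) <= eval M psi x <= (fsize psi)%:R * bound M.
Proof.
have B0 := bound_ge0 M.
elim: psi x => [p|a IHa b IHb|a IHa b IHb|a IHa b IHb|a IHa b IHb| |a IHa] x /=;
  rewrite -?natr1 ?natrD ?mulrDl ?mul1r ?mul0r ?add0r //.
2-5: by move: (IHa x) (IHb x); case: (leP (eval M a x) (eval M b x)); lra.
- exact: val_bounded.
- lra.
have sa_ge0 : 0 <= (fsize a)%:R * bound M by rewrite mulr_ge0.
rewrite /inf0; case: eqP => [_|/eqP/set0P[_ [y xy _]]]; first lra.
apply: inf_within => [_ [z _ <-]|]; first by case/andP: (IHa z); lra.
by exists (eval M a y); [exists y | case/andP: (IHa y); lra].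
Qed.

Lemma eval_FBox psi u :
  eval M (FBox psi) u = inf0 [set eval M psi y | y in [set y | acc M u y]].
Proof. by []. Qed.

Lemma eval_image_has_lbound psi (P : set (world M)) :
  has_lbound [set eval M psi y | y in P].
Proof.
by exists (- ((fsize psi)%:R * bound M)) => _ [y _ <-]; case/andP: (eval_bounded psi y).
Qed.

Lemma eval_box_le psi u v : acc M u v -> eval M (FBox psi) u <= eval M psi v.
Proof.
move=> uv; rewrite eval_FBox inf0_nonempty; last by exists (eval M psi v), v.
by apply: ge_inf; [apply: eval_image_has_lbound | exists v].
Qed.

Lemma eval_box_dead psi u : ~ live u -> eval M (FBox psi) u = 0.
Proof.
move=> dead; rewrite eval_FBox /inf0; case: eqP => // E_neq0; exfalso; apply: E_neq0.
by apply/seteqP; split=> // z [y uy _]; apply: dead; exists y.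
Qed.

Lemma exists_near_min_succ (eps : Real) psi u : 0 < eps -> live u ->
  exists2 v, acc M u v & eval M psi v <= eval M (FBox psi) u + eps.
Proof.
move=> eps_gt0 [v uv]; rewrite eval_FBox; set E := [set _ | _ in _].
have E_inf : has_inf E by split; [exists (eval M psi v), v | apply: eval_image_has_lbound].
rewrite inf0_nonempty; last by case: E_inf.
by have [_ [y uy <-] /ltW] := inf_adherent eps_gt0 E_inf; exists y.
Qed.

Definition near_min_succ (eps : Real) psi u : world M :=
  epsilon (inhabits u) (fun v => acc M u v /\ eval M psi v <= eval M (FBox psi) u + eps).

Lemma near_min_succP (eps : Real) psi u : 0 < eps -> live u ->
  acc M u (near_min_succ eps psi u) /\
  eval M psi (near_min_succ eps psi u) <= eval M (FBox psi) u + eps.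
Proof.
move=> eps_gt0 live_u; have [v uv le_v] := exists_near_min_succ _ psi _ eps_gt0 live_u.
exact: (epsilon_spec (inhabits u) (fun v => _ /\ _) (ex_intro _ v (conj uv le_v))).
Qed.

End ModelFacts.

Section Unravelling.
Variables (M : model) (eps : Real) (F : seq form) (d : nat) (x : world M).

Definition step (u : world M) (i : nat) : world M := near_min_succ M eps (nth FZero F i) u.

(* At depth [k] only the first [k] entries of a path matter; the extra
   position and the extra choice [size F] just keep [inord] usable and the
   path type inhabited when [F] is empty. *)
Local Notation path := {ffun 'I_d.+1 -> 'I_(size F).+1}.
Local Notation node := (option ('I_d.+1 * path)).

Definition choice (t : path) (j : nat) : nat := t (inord j).

Definition walk (t : path) (k : nat) : world M :=
  iteri k (fun j u => step u (choice t j)) x.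

Lemma walkS t k : walk t k.+1 = step (walk t k) (choice t k).
Proof. by []. Qed.

Definition agree_below (t t' : path) (k : nat) : Prop :=
  forall j, (j < k)%N -> choice t j = choice t' j.

Lemma walk_agree t t' k : agree_below t t' k -> walk t k = walk t' k.
Proof.
elim: k => // k IHk tt'.
by rewrite !walkS IHk ?tt' // => j /ltnW; apply: tt'.
Qed.

Lemma agree_below_update t k i : (k <= d)%N -> (i <= size F)%N ->
  exists2 t', agree_below t t' k & choice t' k = i.
Proof.
move=> kd iF; exists [ffun j => if j == inord k then inord i else t j].
  move=> j jk; rewrite /choice ffunE; case: eqP => // /(congr1 (@nat_of_ord _)).
  by rewrite !inordK //; lia.
by rewrite /choice ffunE eqxx inordK.
Qed.

Definition unravel_acc (a b : node) : Prop :=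
  match a, b with
  | Some (k, t), Some (k', t') =>
      k' = k.+1 :> nat /\ agree_below t t' k /\ live M (walk t k)
  | Some (k, t), None => k = d :> nat \/ ~ live M (walk t k)
  | None, b => b = None
  end.

Definition unravel_val (p : nat) (a : node) : Real :=
  if a is Some (k, t) then val M p (walk t k) else 0.

Lemma unravel_val_bounded p a : - bound M <= unravel_val p a <= bound M.
Proof. by case: a => [[k t]|] /=; [apply: val_bounded | have := bound_ge0 M; lra]. Qed.

Definition unravel : model :=
  @Model node (inhabits None) unravel_acc unravel_val _ (bound_ge0 M) unravel_val_bounded.

Lemma unravel_finite : finite_model unravel.
Proof. by exists (enum {: node}) => a; apply: mem_In; rewrite mem_enum. Qed.

Lemma unravel_serial : serial_model unravel.
Proof.
case=> [[k t]|]; last by exists None.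
have [live_u|] := pselect (live M (walk t k)); last by exists None; right.
have [kd|kd] := eqVneq (k : nat) d; first by exists None; left.
exists (Some (inord k.+1, t)); split; last by split.
by rewrite inordK //; have := ltn_ord k; lia.
Qed.

Lemma eval_unravel_None psi : eval unravel psi None = 0.
Proof.
elim: psi => //= [a -> b ->|a -> b ->|a -> b ->|a -> b ->|a IHa].
- by rewrite minxx.
- by rewrite maxxx.
- by rewrite addr0.
- by rewrite subr0.
apply/eqP; rewrite eq_sym eq_le; apply: inf0_within => [_ [_ -> <-]|].
  by rewrite IHa.
by exists 0 => //; exists None.
Qed.

Hypothesis eps_gt0 : 0 < eps.

Lemma stepP {u} i : live M u ->
  acc M u (step u i) /\
  eval M (nth FZero F i) (step u i) <= eval M (FBox (nth FZero F i)) u + eps.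
Proof. exact: near_min_succP. Qed.

Local Notation err psi := ((size (boxed_subforms psi))%:R * eps).

Lemma unravel_box_step a (k : 'I_d.+1) t : List.In a F -> (k < d)%N ->
  (forall (k' : 'I_d.+1) t', k' = k.+1 :> nat ->
     `|eval unravel a (Some (k', t')) - eval M a (walk t' k')| <= err a) ->
  `|eval unravel (FBox a) (Some (k, t)) - eval M (FBox a) (walk t k)| <= err (FBox a).
Proof.
move=> aF kd IHa.
have -> : err (FBox a) = err a + eps by rewrite /= -addn1 natrD mulrDl mul1r.
have eps_ge0 := ltW eps_gt0.
have err_ge0 : 0 <= err a by rewrite mulr_ge0.
rewrite ler_distl [eval unravel _ _]eval_FBox.
have [live_u|dead_u] := pselect (live M (walk t k)); last first.
  rewrite eval_box_dead //.
  apply: inf0_within => [_ [[[k' t']|] ty <-]|].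
  - by case: ty => _ [_ /dead_u].
  - by rewrite eval_unravel_None; lra.
  by exists 0; [exists None; [right | apply: eval_unravel_None] | lra].
apply: inf0_within => [_ [[[k' t']|] ty <-]|].
- case: ty => k'E [tt' _]; have := IHa k' t' k'E; rewrite ler_distl => /andP[lo _].
  apply: le_trans lo; suff : eval M (FBox a) (walk t k) <= eval M a (walk t' k') by lra.
  rewrite k'E walkS -(walk_agree _ _ _ tt').
  by apply: eval_box_le; case: (stepP (choice t' k) live_u).
- by case: ty => [|/(_ live_u)]; lia.
have [n aFn an] := In_nth FZero aF.
have [t' tt' t'n] := agree_below_update t k n (ltnW kd) (ltnW aFn).
have k1 : (inord k.+1 : 'I_d.+1) = k.+1 :> nat by rewrite inordK.
exists (eval unravel a (Some (inord k.+1, t'))).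
  by exists (Some (inord k.+1, t')).
have := IHa _ t' k1; rewrite ler_distl k1 walkS -(walk_agree _ _ _ tt') t'n => /andP[_ hi].
apply: le_trans hi _; have [_] := stepP n live_u; rewrite an; lra.
Qed.

Lemma eval_unravel_approx psi (k : 'I_d.+1) t :
  List.incl (boxed_subforms psi) F -> (mdepth psi + k <= d)%N ->
  `|eval unravel psi (Some (k, t)) - eval M psi (walk t k)| <= err psi.
Proof.
elim: psi k t => [p|a IHa b IHb|a IHa b IHb|a IHa b IHb|a IHa b IHb| |a IHa] k t.
1,6: by rewrite subrr normr0 mul0r.
1-4: move=> /List.incl_app_inv[Fa Fb] /= dk; rewrite size_cat natrD mulrDl;
  by case: (dist_binop_le (IHa k t Fa ltac:(lia)) (IHb k t Fb ltac:(lia))).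
move=> /(@List.incl_cons_inv _ a)[aF aboxed] /= dk.
apply: unravel_box_step => // [|k' t' k'E]; first lia.
by apply: IHa => //; lia.
Qed.

End Unravelling.

Theorem lemma2p1 (phi : form) :
  KA_valid phi <->
  (forall M : model, finite_model M -> serial_model M -> valid_in M phi).
Proof.
split=> [valid M _ _|valid_fin M x]; first exact: valid.
rewrite leNgt; apply/negP => phi_neg.
pose F := boxed_subforms phi; pose d := mdepth phi; pose n := size F.
pose eps := - eval M phi x / n.+1%:R.
have eps_gt0 : 0 < eps by rewrite divr_gt0 // oppr_gt0.
have err_lt : n%:R * eps < - eval M phi x.
  by rewrite mulrA ltr_pdivrMr // -natr1 mulrDr mulr1; nra.
pose t0 : {ffun 'I_d.+1 -> 'I_n.+1} := [ffun=> ord0].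
have := @eval_unravel_approx M eps F d x eps_gt0 phi ord0 t0 (List.incl_refl _) (eq_leq (addn0 d)).
have := valid_fin _ (unravel_finite M eps F d x) (unravel_serial M eps F d x) (Some (ord0, t0)).
rewrite ler_distl; lra.
Qed.
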